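(* Let $G=\langle A\cup B\rangle$ be a CS group and let $g\in G$. Then: (1) $\mathrm{syl}(g|_x)\le \tfrac12(\mathrm{syl}(g)+1)$ for all $x\in X$; (2) $\sum_{x\in X}\mathrm{syl}(g|_x)\le \mathrm{syl}(g)$; (3) $\mathrm{syl}(g\|_x)\le\mathrm{syl}(g)$ for all $x\in X$ with $\ell_g(x)<\infty$; (4) if the permutation $g|^\epsilon$ has finite order, then $g\|_x\in A$ for all but finitely many $x\in X$.
   Context: Let $X$ be a nonempty set (possibly infinite) with a distinguished letter $0\in X$, and $\dot X=X\setminus\{0\}$. $X^*$ is the free monoid on $X$ (concatenation $u\star v$, empty word $\epsilon$), viewed as a regular rooted tree; $X^n$ is the $n$-th layer. $\mathrm{Aut}(X^* )$ is the group of root-fixing tree automorphisms, acting on the right ($v\mapsto v.g$; $gh$ = first $g$ then $h$); conjugation is ${}^hg=hgh^{-1}$. The section $g|_u$ is defined by $(u\star v).g=u.g\star v.(g|_u)$ for all $v$; $g|^\epsilon\in\mathrm{Sym}(X)$ is the permutation induced by $g$ on $X^1=X$. Elements $\rho\in\mathrm{Sym}(X)$ are identified with rooted automorphisms $(x\star v).\rho=x.\rho\star v$. $\mathrm{St}(1)$ is the stabiliser of all vertices of $X^1$. For a vertex $v$, $\ell_g(v)$ is the length of the $\langle g\rangle$-orbit of $v$; if finite, $g\|_v:=g^{\ell_g(v)}|_v$ (stabilised section). A constant spinal (CS) group is $G=\langle A\cup B\rangle\le\mathrm{Aut}(X^* )$, where $A\le\mathrm{Sym}(X)$ is a transitive permutation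 group (the rooted group, embedded as rooted automorphisms) and $B\le\mathrm{St}(1)$ is a subgroup (the directed group) such that $b|_0=b$ for all $b\in B$ and the elements $b|_x$ ($b\in B$, $x\in\dot X$) lie in $A$ and generate $A$. Every $g\in G$ can be written $g=({}^{a_0}b_0)({}^{a_1}b_1)\cdots({}^{a_{n-1}}b_{n-1})a_n$ with $a_i\in A$, $b_i\in B$, $n\in\mathbb N$; the syllable length $\mathrm{syl}(g)$ is the least such $n$. *)

From mathcomp Require Import all_boot.
From mathcomp Require Import boolp.
From Stdlib Require List.
Set Implicit Arguments. Unset Strict Implicit. Unset Printing Implicit Defensive.

Section CS.
Variable X : Type.

(* Vertices of the tree X^* are words (seq X); the root is [::].
   Automorphisms act on the RIGHT: v.g is written (g v), and the product
   g h (first g, then h) is the function (fun v => h (g v)). *)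

Definition aut_mul (g h : seq X -> seq X) : seq X -> seq X := fun v => h (g v).

Definition is_tree_aut (g : seq X -> seq X) : Prop :=
  bijective g /\ (forall u, size (g u) = size u) /\
  (forall u v, g u = take (size u) (g (u ++ v))).

(* section g|_u : (u ++ v).g = u.g ++ v.(g|_u) *)
Definition section (g : seq X -> seq X) (u : seq X) : seq X -> seq X :=
  fun v => drop (size u) (g (u ++ v)).

Definition rooted (rho : X -> X) : seq X -> seq X :=
  fun v => if v is x :: w then rho x :: w else [::].

Definition top_perm (g : seq X -> seq X) (x0 : X) : X -> X :=
  fun x => head x0 (g [:: x]).

Definition is_subgroup (T : Type) (S : (T -> T) -> Prop) : Prop :=
  S id /\ (forall f g, S f -> S g -> S (fun t => g (f t))) /\
  (forall f, S f -> exists f', S f' /\ cancel f f' /\ cancel f' f).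

Inductive generated (T : Type) (Sg : (T -> T) -> Prop) : (T -> T) -> Prop :=
  | gen_base f : Sg f -> generated Sg f
  | gen_id : generated Sg id
  | gen_mul f g : generated Sg f -> generated Sg g -> generated Sg (fun t => g (f t))
  | gen_inv f f' : generated Sg f -> cancel f f' -> cancel f' f -> generated Sg f'
  | gen_ext f f' : generated Sg f -> f =1 f' -> generated Sg f'.

Definition CS_data (x0 : X) (A : (X -> X) -> Prop)
    (B : (seq X -> seq X) -> Prop) : Prop :=
  is_subgroup A /\
  (forall x y, exists a, A a /\ a x = y) /\
  (is_subgroup B /\ (forall b, B b -> is_tree_aut b)) /\
  (forall b x, B b -> b [:: x] = [:: x]) /\
  (forall b, B b -> section b [:: x0] =1 b) /\
  (forall b x, B b -> x <> x0 ->
     exists a, A a /\ section b [:: x] =1 rooted a) /\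
  (forall a, A a -> generated
     (fun s => exists b x, [/\ B b, x <> x0 & section b [:: x] =1 rooted s])
     a).

Definition CS_group (A : (X -> X) -> Prop) (B : (seq X -> seq X) -> Prop)
  : (seq X -> seq X) -> Prop :=
  generated (fun g => (exists a, A a /\ g = rooted a) \/ B g).

(* conjugate ^a b = a b a^{-1} (first a, then b, then a^{-1}) *)
Definition conj_syl (t : (X -> X) * (X -> X) * (seq X -> seq X)) :
  seq X -> seq X :=
  let: (a, ainv, b) := t in fun v => rooted ainv (b (rooted a v)).

(* ( ^{a_0} b_0 ) ... ( ^{a_{n-1}} b_{n-1} ) a_n *)
Definition syl_eval (s : seq ((X -> X) * (X -> X) * (seq X -> seq X)))
  (an : X -> X) : seq X -> seq X :=
  foldr (fun t f => fun v => f (conj_syl t v)) (rooted an) s.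

Definition syl_rep (A : (X -> X) -> Prop) (B : (seq X -> seq X) -> Prop)
  (g : seq X -> seq X) (n : nat) : Prop :=
  exists s an, [/\ size s = n, A an,
    (forall t, List.In t s ->
       let: (a, ainv, b) := t in [/\ A a, cancel a ainv, cancel ainv a & B b])
    & g =1 syl_eval s an].

(* syllable length: least n with a decomposition (0 if none exists) *)
Definition syl (A : (X -> X) -> Prop) (B : (seq X -> seq X) -> Prop)
  (g : seq X -> seq X) : nat :=
  match pselect (exists n, syl_rep A B g n) with
  | left H =>
      @ex_minn (fun n => `[< syl_rep A B g n >])
        (let: ex_intro n Hn := H in ex_intro _ n (introT (asboolP _) Hn))
  | right _ => 0
  end.

Definition orbit_len (g : seq X -> seq X) (v : seq X) (k : nat) : Prop :=
  0 < k /\ iter k g v = v /\ (forall j, 0 < j < k -> iter j g v <> v).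

(* stabilised section g||_v = g^{ell_g(v)}|_v, given ell_g(v) = k *)
Definition stab_section (g : seq X -> seq X) (k : nat) (v : seq X) :
  seq X -> seq X := section (iter k g) v.

End CS.

From mathcomp Require Import all_boot boolp zify.
From Stdlib Require List.
Set Implicit Arguments. Unset Strict Implicit. Unset Printing Implicit Defensive.

(* Write g = (^{a_1} b_1) ... (^{a_n} b_n) a with n = syl g.  Since b|_0 = b and
   b|_y lies in A for y <> 0, the section of ^a b at x is the directed element b
   when a(x) = 0 and a rooted automorphism otherwise; so g|_x is a word of n
   letters from A u B, and a word of letters from A u B has syllable length at
   most its number of maximal blocks of directed letters (merge each block into
   one element of B, conjugate the rooted letters to the right).  Blocks are
   separated by rooted letters, which gives (1).  Each a_i is a permutation, so
   each syllable yields a directed letter at exactly one x; summing over distinct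
   letters gives (2), and over the distinct points of the orbit of x, whose
   sections multiply to g||_x, gives (3).  For (4), if g|^eps = a has order m, a
   directed letter occurs in g||_x only when the <a>-orbit of x contains one of
   the n points a_i^-1(0), i.e. for x in a set of at most n m letters. *)

Notation syllable X := ((X -> X) * (X -> X) * (seq X -> seq X))%type.
Notation factor X := ((X -> X) + (seq X -> seq X))%type.

Lemma rooted_id (X : Type) (v : seq X) : rooted id v = v.
Proof. by case: v. Qed.

Lemma rooted_comp (X : Type) (a a' : X -> X) (v : seq X) :
  rooted a' (rooted a v) = rooted (fun z => a' (a z)) v.
Proof. by case: v. Qed.

Lemma eq_rooted (X : Type) (a a' : X -> X) : a =1 a' -> rooted a =1 rooted a'.
Proof. by move=> eq_a [|y w] //=; rewrite eq_a. Qed.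

Lemma rooted_can (X : Type) (a ai : X -> X) :
  cancel a ai -> cancel (rooted a) (rooted ai).
Proof. by move=> aK [|y w] //=; rewrite aK. Qed.

Lemma tree_aut_nil (X : Type) (b : seq X -> seq X) : is_tree_aut b -> b [::] = [::].
Proof. by move=> [_ [size_b _]]; apply/size0nil; rewrite size_b. Qed.

Lemma tree_aut_cons (X : Type) (b : seq X -> seq X) y v :
  is_tree_aut b -> b [:: y] = [:: y] -> b (y :: v) = y :: section b [:: y] v.
Proof.
move=> [_ [_ prefix_b]] by_y; have := prefix_b [:: y] v; rewrite by_y /= => take_b.
by rewrite -{1}[b (y :: v)](cat_take_drop 1) -take_b.
Qed.

Lemma count_In0 (T : Type) (p : pred T) (l : seq T) :
  (forall t, List.In t l -> ~~ p t) -> count p l = 0.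
Proof.
elim: l => //= t l IH p_l; rewrite (negbTE (p_l t (or_introl erefl))) IH //.
by move=> u u_l; apply: p_l; right.
Qed.

Lemma count_le1_NoDup (T : Type) (p : pred T) (ys : seq T) :
  (forall y z, p y -> p z -> y = z) -> List.NoDup ys -> count p ys <= 1.
Proof.
move=> p_uniq; elim: ys => //= y ys IH /List.NoDup_cons_iff [y_ys ys_uniq].
case py: (p y) => /=; last exact: IH.
rewrite count_In0 // => z z_ys; apply/negP => pz.
by apply: y_ys; rewrite (p_uniq y z).
Qed.

Lemma sumn_map_add (T : Type) (f g : T -> nat) (xs : seq T) :
  sumn [seq f x + g x | x <- xs] = sumn (map f xs) + sumn (map g xs).
Proof. by elim: xs => //= x xs ->; lia. Qed.

Lemma sumn_map_le (T : Type) (f g : T -> nat) (xs : seq T) :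
  (forall x, f x <= g x) -> sumn (map f xs) <= sumn (map g xs).
Proof. by move=> le_fg; elim: xs => //= x xs IH; rewrite leq_add. Qed.

Lemma iter_modn (T : Type) (f : T -> T) m n z :
  (forall z, iter m f z = z) -> iter n f z = iter (n %% m) f z.
Proof.
move=> fm_id; rewrite {1}(divn_eq n m) iterD.
by move: (iter _ f z) => y; elim: (n %/ m) => // q IH; rewrite mulSn iterD fm_id.
Qed.

Lemma iter_inj (T : Type) (f : T -> T) n : injective f -> injective (iter n f).
Proof. by move=> f_inj; elim: n => //= n IH x y /f_inj /IH. Qed.

Lemma NoDup_traject (T : Type) (f : T -> T) x k :
  injective f -> (forall j, 0 < j < k -> iter j f x <> x) ->
  List.NoDup [seq iter i f x | i <- iota 0 k].
Proof.
move=> f_inj aperiodic.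
have lt_neq i j : i < j < k -> iter i f x <> iter j f x.
  move=> /andP [lt_ij lt_jk]; rewrite -(subnKC (ltnW lt_ij)) iterD.
  by move=> /(@iter_inj _ f i f_inj) /esym; apply: aperiodic; lia.
apply: List.NoDup_map_NoDup_ForallPairs; last exact: List.seq_NoDup.
move=> i j /List.in_seq lt_ik /List.in_seq lt_jk eq_ij.
have [lt_ij|lt_ji|//] := ltngtP i j.
- by exfalso; apply: (lt_neq i j _ eq_ij); lia.
- by exfalso; apply: (lt_neq j i _ (esym eq_ij)); lia.
Qed.

Section Syllables.
Variables (X : Type) (A : (X -> X) -> Prop) (B : (seq X -> seq X) -> Prop).
Implicit Types (s : seq (syllable X)) (a : X -> X) (v w : seq X).

Definition conj_prod s : seq X -> seq X :=
  foldr (fun t f v => f (conj_syl t v)) id s.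

Lemma syl_evalE s an v : syl_eval s an v = rooted an (conj_prod s v).
Proof. by rewrite /syl_eval /conj_prod; elim: s v => //= t s IH v; apply: IH. Qed.

Lemma conj_prod_cat s1 s2 v :
  conj_prod (s1 ++ s2) v = conj_prod s2 (conj_prod s1 v).
Proof. by rewrite /conj_prod; elim: s1 v => //= t s1 IH v; apply: IH. Qed.

Definition syl_shift a ai (t : syllable X) : syllable X :=
  let: (a0, ai0, b) := t in (fun z => a0 (a z), fun z => ai (ai0 z), b).

Lemma conj_prod_rooted a ai s w : cancel ai a ->
  conj_prod s (rooted a w) = rooted a (conj_prod (map (syl_shift a ai) s) w).
Proof.
move=> aiK; elim: s w => [|[[a0 ai0] b] s IH] w //=.
rewrite -IH /conj_syl !rooted_comp; congr conj_prod.
by apply: eq_rooted => z; rewrite aiK.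
Qed.

Definition admissible s := forall t, List.In t s ->
  let: (a, ainv, b) := t in [/\ A a, cancel a ainv, cancel ainv a & B b].

Lemma admissible_cat s1 s2 :
  admissible s1 -> admissible s2 -> admissible (s1 ++ s2).
Proof. by move=> adm1 adm2 t /List.in_app_iff [/adm1|/adm2]. Qed.

Lemma admissible_cons t s : admissible (t :: s) ->
  (let: (a, ainv, b) := t in [/\ A a, cancel a ainv, cancel ainv a & B b])
  /\ admissible s.
Proof. by move=> adm; split=> [|u u_s]; apply: adm; [left | right]. Qed.

Hypotheses (HA : is_subgroup A) (HB : is_subgroup B).

Lemma admissible_shift a ai s : A a -> cancel a ai -> cancel ai a ->
  admissible s -> admissible (map (syl_shift a ai) s).
Proof.
have [_ [A_mul _]] := HA; move=> Aa aK aiK adm t /List.in_map_iff [[[a0 ai0] b] [<- t_s]].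
have /= [Aa0 a0K ai0K Bb] := adm _ t_s.
split=> //; first exact: A_mul.
  by move=> z /=; rewrite a0K aK.
by move=> z /=; rewrite aiK ai0K.
Qed.

Lemma admissible_inv s : admissible s ->
  exists2 s', admissible s' & cancel (conj_prod s) (conj_prod s').
Proof.
have [_ [_ B_inv]] := HB; elim: s => [|t s IH] adm; first by exists [::].
have [adm_t /IH [s' adm' sK]] := admissible_cons adm.
case: t adm_t {adm} => [[a ai] b] [Aa aK aiK /B_inv [b' [Bb' [bK b'K]]]].
exists (s' ++ [:: (a, ai, b')]).
  by apply: admissible_cat => // t [<-|[]].
move=> u; rewrite conj_prod_cat /= sK /conj_syl.
by rewrite (rooted_can aiK) bK (rooted_can aK).
Qed.

Lemma CS_group_syl_rep g : CS_group A B g ->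
  exists s an, [/\ A an, admissible s & g =1 syl_eval s an].
Proof.
have [A1 [A_mul A_inv]] := HA.
elim=> {g} [f [[a [Aa ->]]|Bf]| | f g _ [s1 [a1 [Aa1 adm1 f_eq]]] _ [s2 [a2 [Aa2 adm2 g_eq]]]
  | f f' _ [s [an [Aan adm f_eq]]] fK f'K | f f' _ [s [an [Aan adm f_eq]]] eq_f].
- by exists [::], a; split.
- exists [:: (id, id, f)], id; split=> //; first by move=> t [<-|[]].
  by move=> v; rewrite /= /conj_syl !rooted_id.
- by exists [::], id; split=> // v; rewrite /= rooted_id.
- have [a1i [Aa1i [a1K a1iK]]] := A_inv _ Aa1.
  exists (s1 ++ map (syl_shift a1 a1i) s2), (fun z => a2 (a1 z)); split.
  + exact: A_mul.
  + by apply: admissible_cat => //; apply: admissible_shift.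
  + move=> v; rewrite f_eq g_eq !syl_evalE conj_prod_cat (conj_prod_rooted _ _ a1iK).
    by rewrite rooted_comp.
- have [s' adm' sK] := admissible_inv adm.
  have [ani [Aani [anK aniK]]] := A_inv _ Aan.
  exists (map (syl_shift ani an) s'), ani; split=> //; first exact: admissible_shift.
  have hK : cancel f (syl_eval (map (syl_shift ani an) s') ani).
    move=> u; rewrite f_eq !syl_evalE -(conj_prod_rooted _ _ anK).
    by rewrite (rooted_can anK) sK.
  by move=> w; rewrite -[in RHS](f'K w) hK.
- by exists s, an; split=> // v; rewrite -eq_f.
Qed.

End Syllables.

Lemma syl_min (X : Type) (A : (X -> X) -> Prop) B h n :
  syl_rep A B h n -> syl A B h <= n.
Proof.
move=> rep_n; rewrite /syl; case: pselect => [ex|[]]; last by exists n.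
by case: ex_minnP => m _; apply; apply/asboolP.
Qed.

Lemma syl_rep_syl (X : Type) (A : (X -> X) -> Prop) B g :
  is_subgroup A -> is_subgroup B -> CS_group A B g -> syl_rep A B g (syl A B g).
Proof.
move=> HA HB /(CS_group_syl_rep HA HB) [s [an [Aan adm g_eq]]].
rewrite /syl; case: pselect => [ex|[]]; last by exists (size s), s, an.
by case: ex_minnP => m /asboolP.
Qed.

Section Words.
Variables (X : Type) (A : (X -> X) -> Prop) (B : (seq X -> seq X) -> Prop).
Implicit Types (L : seq (factor X)) (f : factor X).

Definition factor_act f : seq X -> seq X :=
  match f with inl a => rooted a | inr b => b end.

Definition factor_in f : Prop :=
  match f with inl a => exists a', A a' /\ a =1 a' | inr b => B b end.

Fixpoint word_act L : seq X -> seq X :=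
  if L is f :: L' then fun v => word_act L' (factor_act f v) else id.

Definition word_in L := forall f, List.In f L -> factor_in f.

Definition directed f : bool := if f is inr _ then true else false.

Definition starts_directed L : bool := if L is f :: _ then directed f else false.

Fixpoint runs L : nat :=
  if L is f :: L' then runs L' + (directed f && ~~ starts_directed L') else 0.

Lemma runs_le_count L : runs L <= count directed L.
Proof. by elim: L => [|[a|b] L IH] //=; case: (starts_directed L) => /=; lia. Qed.

Lemma runs_le_half L : 2 * runs L <= size L + 1.
Proof.
suff : runs L <= count (predC directed) L + starts_directed L.
  by have := runs_le_count L; have := count_predC directed L; lia.
by elim: L => [|[a|b] L IH] //=; case: (starts_directed L) IH => /=; lia.
Qed.

Lemma word_act_cat L1 L2 v : word_act (L1 ++ L2) v = word_act L2 (word_act L1 v).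
Proof. by elim: L1 v => //= f L1 IH v; rewrite IH. Qed.

Lemma word_in_cat L1 L2 : word_in L1 -> word_in L2 -> word_in (L1 ++ L2).
Proof. by move=> in1 in2 f /List.in_app_iff [/in1|/in2]. Qed.

Lemma word_in_cons f L : word_in (f :: L) -> factor_in f /\ word_in L.
Proof. by move=> inL; split=> [|h h_L]; apply: inL; [left | right]. Qed.

Hypotheses (HA : is_subgroup A) (HB : is_subgroup B).

(* The last conjunct is the induction invariant: a leading block of directed
   factors is kept as an unconjugated first syllable, into which a further
   directed factor can be absorbed. *)
Lemma word_syl_rep L : word_in L ->
  exists s an, [/\ size s = runs L, A an, admissible A B s,
    word_act L =1 syl_eval s an &
    starts_directed L -> exists b s', B b /\ s = (id, id, b) :: s'].
Proof.
have [A1 [A_mul A_inv]] := HA; have [_ [B_mul _]] := HB.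
elim: L => [_|f L IH /word_in_cons [in_f /IH [s [an [size_s Aan adm L_eq head_s]]]]].
  by exists [::], id; split=> // v; rewrite /= rooted_id.
case: f in_f => [a [a' [Aa' eq_a]]|b Bb] /=.
  have [ai [Aai [a'K aiK]]] := A_inv _ Aa'.
  exists (map (syl_shift a' ai) s), (fun z => an (a' z)); split=> //.
  - by rewrite size_map size_s addn0.
  - exact: A_mul.
  - exact: admissible_shift.
  - move=> v; rewrite (eq_rooted eq_a) L_eq !syl_evalE (conj_prod_rooted _ _ aiK).
    by rewrite rooted_comp.
case: (starts_directed L) head_s => [/(_ isT) [b2 [s' [Bb2 s_eq]]]|_] /=.
  subst s.
  exists ((id, id, fun v => b2 (b v)) :: s'), an; split=> //.
  - by rewrite addn0.
  - move=> t [<-|t_s']; first by split=> //; apply: B_mul.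
    by apply: adm; right.
  - by move=> v /=; rewrite L_eq /= /conj_syl !rooted_id.
  - by exists (fun v => b2 (b v)), s'; split=> //; apply: B_mul.
exists ((id, id, b) :: s), an; split=> //.
- by rewrite /= size_s addn1.
- by move=> t [<-|t_s]; [ | apply: adm].
- by move=> v /=; rewrite L_eq /= /conj_syl !rooted_id.
- by exists b, s.
Qed.

Lemma syl_le_runs h L : word_in L -> h =1 word_act L -> syl A B h <= runs L.
Proof.
move=> /word_syl_rep [s [an [size_s Aan adm L_eq _]]] h_eq.
by apply: syl_min; exists s, an; split=> // v; rewrite h_eq L_eq.
Qed.

Lemma word_act_rooted L : word_in L -> count directed L = 0 ->
  exists a, A a /\ word_act L =1 rooted a.
Proof.
move=> /word_syl_rep [[|t s] [an [size_s Aan _ L_eq _]]] count0.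
  by exists an.
by have := runs_le_count L; rewrite -size_s count0.
Qed.

End Words.

Arguments directed {X}.

Section SectionWords.
Variables (X : Type) (x0 : X) (A : (X -> X) -> Prop) (B : (seq X -> seq X) -> Prop).
Hypotheses (B_aut : forall b, B b -> is_tree_aut b)
  (B_stab1 : forall b x, B b -> b [:: x] = [:: x])
  (B_section0 : forall b, B b -> section b [:: x0] =1 b)
  (B_sectionA : forall b x, B b -> x <> x0 ->
     exists a, A a /\ section b [:: x] =1 rooted a).
Implicit Types (s : seq (syllable X)) (x : X) (v : seq X).

(* The section at x of the syllable ^a b is b if a x = 0, and otherwise the
   rooted automorphism b|_{a x}, read off from its action on the first layer. *)
Definition section_factor x (t : syllable X) : factor X :=
  let: (a, ai, b) := t in
  if pselect (a x = x0) then inr b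
  else inl (fun z => head x0 (section b [:: a x] [:: z])).
Arguments section_factor : simpl never.

Lemma section_factor_directed x a ai b :
  directed (section_factor x (a, ai, b)) -> a x = x0.
Proof. by rewrite /section_factor; case: pselect. Qed.

Lemma section_factorP x a ai b : B b ->
  factor_in A B (section_factor x (a, ai, b)) /\
  factor_act (section_factor x (a, ai, b)) =1 section b [:: a x].
Proof.
move=> Bb; rewrite /section_factor; case: pselect => [ax0|ax_neq] /=.
  by split=> // v; rewrite ax0 B_section0.
have [a' [Aa' sec_eq]] := B_sectionA Bb ax_neq.
have eq_a' : (fun z => head x0 (section b [:: a x] [:: z])) =1 a'.
  by move=> z; rewrite sec_eq.
by split; [exists a' | move=> v; rewrite (eq_rooted eq_a') sec_eq].
Qed.

Lemma section_word_in x s : admissible A B s ->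
  word_in A B (map (section_factor x) s).
Proof.
move=> adm f /List.in_map_iff [[[a ai] b] [<- t_s]].
by have /= [_ _ _ /(@section_factorP x a ai b) []] := adm _ t_s.
Qed.

Lemma syl_eval_cons s an x v : admissible A B s ->
  syl_eval s an (x :: v) = an x :: word_act (map (section_factor x) s) v.
Proof.
elim: s v => [|[[a ai] b] s IH] v // /admissible_cons [[_ aK _ Bb] adm] /=.
rewrite -IH // /conj_syl /= (tree_aut_cons _ (B_aut Bb) (B_stab1 _ Bb)) /= aK.
by have [_ ->] := @section_factorP x a ai b Bb.
Qed.

Lemma word_act_nil L : word_in A B L -> word_act L [::] = [::].
Proof.
elim: L => [|[a|b] L IH] // /word_in_cons [in_f in_L] /=; first exact: IH.
by rewrite tree_aut_nil ?IH //; apply: B_aut.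
Qed.

Lemma sum_count_section_factors s ys : admissible A B s -> List.NoDup ys ->
  sumn [seq count directed (map (section_factor y) s) | y <- ys] <= size s.
Proof.
move=> adm ys_uniq; elim: s adm => [_|[[a ai] b] s IH /admissible_cons].
  by elim: ys {ys_uniq}.
move=> [[_ aK _ _] adm] /=; rewrite sumn_map_add sumn_count.
suff : count (fun y => directed (section_factor y (a, ai, b))) ys <= 1.
  by have := IH adm; lia.
apply: count_le1_NoDup => // y z /section_factor_directed ay0 /section_factor_directed az0.
by rewrite -(aK y) -(aK z) ay0 az0.
Qed.

Definition orbit_word s an x k : seq (factor X) :=
  flatten [seq map (section_factor (iter i an x)) s | i <- iota 0 k].

Lemma orbit_word_S s an x k :
  orbit_word s an x k.+1 = orbit_word s an x k ++ map (section_factor (iter k an x)) s.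
Proof. by rewrite /orbit_word -addn1 iotaD map_cat flatten_cat /= cats0. Qed.

Lemma orbit_word_in s an x k : admissible A B s -> word_in A B (orbit_word s an x k).
Proof.
move=> adm; elim: k => [|k IH] //; rewrite orbit_word_S.
by apply: word_in_cat => //; apply: section_word_in.
Qed.

Lemma count_orbit_word s an x k :
  count directed (orbit_word s an x k) =
  sumn [seq count directed (map (section_factor y) s) | y <- [seq iter i an x | i <- iota 0 k]].
Proof. by rewrite count_flatten -!map_comp. Qed.

Hypotheses (HA : is_subgroup A) (HB : is_subgroup B).
Variables (g : seq X -> seq X) (s : seq (syllable X)) (an : X -> X).
Hypotheses (Aan : A an) (adm : admissible A B s) (g_eq : g =1 syl_eval s an).

Lemma iter_cons j x v :
  iter j g (x :: v) = iter j an x :: word_act (orbit_word s an x j) v.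
Proof.
elim: j => // j IH.
by rewrite iterS IH g_eq syl_eval_cons // orbit_word_S word_act_cat.
Qed.

Lemma iter_singleton j x : iter j g [:: x] = [:: iter j an x].
Proof. by rewrite iter_cons word_act_nil //; apply: orbit_word_in. Qed.

Lemma stab_sectionE k x : stab_section g k [:: x] =1 word_act (orbit_word s an x k).
Proof. by move=> v; rewrite /stab_section /section /= iter_cons /= drop0. Qed.

Lemma top_permE : top_perm g x0 =1 an.
Proof. by move=> z; rewrite /top_perm g_eq syl_eval_cons. Qed.

Lemma syl_section_le_runs x :
  syl A B (section g [:: x]) <= runs (map (section_factor x) s).
Proof.
apply: syl_le_runs => //; first exact: section_word_in.
by move=> v; rewrite /section /= g_eq syl_eval_cons //= drop0.
Qed.

Lemma syl_section_half x : 2 * syl A B (section g [:: x]) <= size s + 1.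
Proof.
have := runs_le_half (map (section_factor x) s); rewrite size_map.
by have := syl_section_le_runs x; lia.
Qed.

Lemma sum_syl_sections xs : List.NoDup xs ->
  sumn [seq syl A B (section g [:: x]) | x <- xs] <= size s.
Proof.
move=> xs_uniq; apply: leq_trans (sum_count_section_factors adm xs_uniq).
apply: sumn_map_le => x; apply: leq_trans (syl_section_le_runs x) _.
exact: runs_le_count.
Qed.

Lemma syl_stab_section x k : orbit_len g [:: x] k ->
  syl A B (stab_section g k [:: x]) <= size s.
Proof.
move=> [_ [_ aperiodic]].
have anx_aperiodic j : 0 < j < k -> iter j an x <> x.
  by move=> j_lt anx; apply: (aperiodic j j_lt); rewrite iter_singleton anx.
have [_ [_ A_inv]] := HA; have [ani [_ [anK _]]] := A_inv _ Aan.
apply: leq_trans (syl_le_runs HA HB (@orbit_word_in s an x k adm) (stab_sectionE k x)) _.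
apply: leq_trans (runs_le_count _) _; rewrite count_orbit_word.
exact/sum_count_section_factors/NoDup_traject/anx_aperiodic/(can_inj anK).
Qed.

Lemma stab_section_rooted m : 0 < m -> (forall z, iter m an z = z) ->
  exists xs, forall x, ~ List.In x xs ->
    forall k, exists a, A a /\ stab_section g k [:: x] =1 rooted a.
Proof.
move=> m_gt0 an_m.
exists (List.flat_map (fun y => [seq iter j an y | j <- iota 0 m])
                      [seq t.1.2 x0 | t <- s]).
move=> x x_notin k.
have undirected i t : List.In t s -> ~~ directed (section_factor (iter i an x) t).
  case: t => [[a ai] b] t_s; apply/negP => /section_factor_directed a_iter.
  have /= [_ aK _ _] := adm t_s.
  apply: x_notin; apply/List.in_flat_map; exists (ai x0); split.
    exact: (List.in_map (fun t : syllable X => t.1.2 x0) _ _ t_s).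
  apply/List.in_map_iff; exists ((m * i.+1 - i) %% m); split; last first.
    by apply/List.in_seq; have := ltn_pmod (m * i.+1 - i) m_gt0; lia.
  rewrite -(iter_modn _ _ an_m) -a_iter aK -iterD subnK.
    by rewrite (iter_modn _ _ an_m) modnMr.
  exact: leq_trans (leqnSn i) (leq_pmull _ m_gt0).
have [a [Aa word_eq]] : exists a, A a /\ word_act (orbit_word s an x k) =1 rooted a.
  apply: (word_act_rooted HA HB (@orbit_word_in s an x k adm)).
  rewrite /orbit_word count_flatten; elim: (iota 0 k) => //= i l ->.
  by rewrite addn0 count_map; apply: count_In0 => t /(undirected i).
by exists a; split=> // v; rewrite stab_sectionE.
Qed.

End SectionWords.

Theorem mainTheorem2 (X : Type) (x0 : X) (A : (X -> X) -> Prop)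
  (B : (seq X -> seq X) -> Prop) (g : seq X -> seq X) :
  CS_data x0 A B -> CS_group A B g ->
  [/\ (forall x : X, 2 * syl A B (section g [:: x]) <= syl A B g + 1),
      (* the possibly infinite sum (2) is bounded through its finite partial
         sums over distinct letters *)
      (forall xs : seq X, List.NoDup xs ->
         sumn (map (fun x => syl A B (section g [:: x])) xs) <= syl A B g),
      (forall (x : X) (k : nat), orbit_len g [:: x] k ->
         syl A B (stab_section g k [:: x]) <= syl A B g)
    &
      ((exists m, 0 < m /\ forall x, iter m (top_perm g x0) x = x) ->
       exists xs : seq X, forall x : X, ~ List.In x xs ->
         forall k, orbit_len g [:: x] k ->
           exists a, A a /\ stab_section g k [:: x] =1 rooted a)].
Proof.
move=> [HA [_ [[HB B_aut] [B_stab1 [B_section0 [B_sectionA _]]]]]].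
move=> /(syl_rep_syl HA HB) [s [an [<- Aan adm g_eq]]].
split.
- exact: (syl_section_half B_aut B_stab1 B_section0 B_sectionA HA HB adm g_eq).
- exact: (sum_syl_sections B_aut B_stab1 B_section0 B_sectionA HA HB adm g_eq).
- exact: (syl_stab_section B_aut B_stab1 B_section0 B_sectionA HA HB Aan adm g_eq).
move=> [m [m_gt0 top_m]].
have an_m z : iter m an z = z.
  by rewrite -(eq_iter (top_permE B_aut B_stab1 B_section0 B_sectionA adm g_eq)).
have [xs xs_rooted] :=
  stab_section_rooted B_aut B_stab1 B_section0 B_sectionA HA HB adm g_eq m_gt0 an_m.
by exists xs => x x_xs k _; apply: xs_rooted.
Qed.
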